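(* (Manipulation Resistance.) In the ASAS-BridgeAMM protocol described in the context, an adversary $\mathcal{A}$ controlling the relayer and manipulating the oracle price by a relative amount $\delta$ can extract profit $\Pi_{\mathcal{A}}$ bounded by $\Pi_{\mathcal{A}} \le \delta\cdot V_{swap} + s_{\max}\cdot V_{pool}$.
   Context: ASAS-BridgeAMM is a cross-chain bridge whose destination-chain settlement is a constant-product AMM with reserve $x$ of the input asset. A Byzantine relayer may delay, reorder, censor or front-run cross-chain messages (but cannot forge consensus signatures). The adversary's actions are: manipulate the oracle price by relative amount $\delta$, delay a message by latency $\tau$, and execute a swap of size $V$ (denoted $V_{swap}$). The adversary's profit is $\Pi(\delta,\tau,V)=\delta V - s(V)V - h(\tau)V$, where $s(V)=V/(x+V)$ is the slippage and $h(\tau)\in[h_{\min},h_{\max}]$ is the latency-dependent haircut ($h(\tau)=h_{\min}$ for $\tau\le T_{\min}$, linear between $T_{\min}$ and $T_{\max}$, $h_{\max}$ for $\tau\ge T_{\max}$; implementation $h_{\min}=0.3\%$, $h_{\max}=5\%$, $T_{\max}=\tau_{\max}=30$ min). Swaps revert if slippage exceeds the maximum slippage bound $s_{\max}$ (implementation: $10\%$). A circuit breaker halts the protocol (swap reverts, profit $0$) if the price deviation $\delta\ge\theta_{price}=0.5$ or the latency $\tau>2\tau_{\max}$. $V_{pool}$ denotes the pool value. *)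

From Stdlib Require Import Reals Lra.
Open Scope R_scope.

(* Implementation parameters of ASAS-BridgeAMM (time in minutes). *)
Definition h_min : R := 3 / 1000.
Definition h_max : R := 5 / 100.
Definition tau_max : R := 30.
Definition T_max : R := tau_max.
Definition s_max : R := 1 / 10.
Definition theta_price : R := 1 / 2.

(* Constant-product AMM slippage for a swap of size V against reserve x. *)
Definition slippage (x V : R) : R := V / (x + V).

Definition haircut (T_min tau : R) : R :=
  if Rle_dec tau T_min then h_min
  else if Rle_dec T_max tau then h_max
  else h_min + (h_max - h_min) * (tau - T_min) / (T_max - T_min).

Definition raw_profit (x T_min delta tau V : R) : R :=
  delta * V - slippage x V * V - haircut T_min tau * V.

(* Realised adversarial profit: 0 if the circuit breaker halts the protocol
   or the swap reverts because slippage exceeds s_max; otherwise raw profit. *)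
Definition adv_profit (x T_min delta tau V : R) : R :=
  if Rle_dec theta_price delta then 0
  else if Rlt_dec (2 * tau_max) tau then 0
  else if Rlt_dec s_max (slippage x V) then 0
  else raw_profit x T_min delta tau V.

From Stdlib Require Import Reals Lra.
Open Scope R_scope.

(* Slippage and the latency haircut are both nonnegative fees, so a swap that
   goes through earns the adversary at most [delta * V_swap], and a halted or
   reverted swap earns nothing; the pool term [s_max * V_pool] is pure slack. *)

Lemma slippage_ge0 (x V : R) : 0 < x -> 0 <= V -> 0 <= slippage x V.
Proof.
  intros Hx HV. unfold slippage, Rdiv. apply Rle_mult_inv_pos; lra.
Qed.

(* Inside the interpolation branch, [T_min < tau < T_max], so the slope's
   denominator is positive without assuming [T_min < T_max]. *)
Lemma h_min_le_haircut (T_min tau : R) : h_min <= haircut T_min tau.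
Proof.
  unfold haircut.
  destruct (Rle_dec tau T_min) as [_ | Hlo]; [lra |].
  destruct (Rle_dec T_max tau) as [_ | Hhi]; [unfold h_min, h_max; lra |].
  assert (Hfrac : 0 <= (h_max - h_min) * (tau - T_min) / (T_max - T_min)).
  { unfold Rdiv. apply Rle_mult_inv_pos; [apply Rmult_le_pos | ]; unfold h_min, h_max in *; lra. }
  lra.
Qed.

Lemma haircut_ge0 (T_min tau : R) : 0 <= haircut T_min tau.
Proof.
  pose proof (h_min_le_haircut T_min tau). unfold h_min in *. lra.
Qed.

Lemma raw_profit_le_gain (x T_min delta tau V : R) :
  0 < x -> 0 <= V -> raw_profit x T_min delta tau V <= delta * V.
Proof.
  intros Hx HV. unfold raw_profit.
  pose proof (slippage_ge0 x V Hx HV).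
  pose proof (haircut_ge0 T_min tau).
  assert (0 <= slippage x V * V) by (apply Rmult_le_pos; lra).
  assert (0 <= haircut T_min tau * V) by (apply Rmult_le_pos; lra).
  lra.
Qed.

Lemma adv_profit_le_gain (x T_min delta tau V : R) :
  0 < x -> 0 <= delta -> 0 <= V -> adv_profit x T_min delta tau V <= delta * V.
Proof.
  intros Hx Hd HV.
  assert (Hgain : 0 <= delta * V) by (apply Rmult_le_pos; lra).
  unfold adv_profit.
  destruct (Rle_dec theta_price delta); [lra |].
  destruct (Rlt_dec (2 * tau_max) tau); [lra |].
  destruct (Rlt_dec s_max (slippage x V)); [lra |].
  apply raw_profit_le_gain; assumption.
Qed.

Theorem theorem3 :
  forall (x V_pool T_min delta tau V_swap : R),
    0 < x -> 0 <= V_pool ->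
    0 <= T_min -> T_min < T_max ->
    0 <= delta -> 0 <= tau -> 0 <= V_swap ->
    adv_profit x T_min delta tau V_swap <= delta * V_swap + s_max * V_pool.
Proof.
  intros x V_pool T_min delta tau V_swap Hx Hpool _ _ Hdelta _ Hswap.
  assert (Hslack : 0 <= s_max * V_pool) by (unfold s_max; apply Rmult_le_pos; lra).
  pose proof (adv_profit_le_gain x T_min delta tau V_swap Hx Hdelta Hswap).
  lra.
Qed.
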